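(* Let $n$ and $t$ be positive integers and $d=2t+1$. If $t\leqslant n-\sqrt{n}-1$, $n\cdot\prod_{i=0}^{t}(n-i)\leqslant d\cdot d!$, and $d\leqslant n-1$, then $A_{new}(n,d)\leqslant A_{SP}(n,d)$.
   Context: $S_n$ is the symmetric group on $[n]$; the characteristic set of $\pi\in S_n$ is $A(\pi)=\{(\pi(i),\pi(i+1)):1\leqslant i<n\}$, and the block permutation distance is $d_B(\pi_1,\pi_2)=|A(\pi_1)\setminus A(\pi_2)|$. The $t$-block permutation ball $b_B(n,t)$ is the set of $\sigma\in S_n$ with $d_B(\sigma,\mathrm{id})\leqslant t$. The sphere-packing bound is $A_{SP}(n,2t+1)=\frac{n!}{|b_B(n,t)|}$, and the new bound is $A_{new}(n,d)=\frac{\binom{n}{d}\binom{n}{d}(n-d)!}{\binom{n-1}{n-d}}$. *)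

From HB Require Import structures.
From mathcomp Require Import all_boot all_order all_algebra all_fingroup.
Set Implicit Arguments. Unset Strict Implicit. Unset Printing Implicit Defensive.
Import Order.TTheory GRing.Theory Num.Theory.

(* S_n is 'S_n, permutations of 'I_n = {0,..,n-1} (a relabelling of [n]). *)

Definition charset n (p : 'S_n) : {set 'I_n * 'I_n} :=
  [set (p i, p j) | i in 'I_n, j in 'I_n & val j == (val i).+1].

Definition dB n (p1 p2 : 'S_n) : nat := #|charset p1 :\: charset p2|.

Definition ballB n t : {set 'S_n} := [set s : 'S_n | dB s 1 <= t].

Local Open Scope ring_scope.

(* sphere-packing bound A_SP(n, 2t+1) = n! / |b_B(n,t)| (indexed by t) *)
Definition A_SP (R : fieldType) (n t : nat) : R :=
  (n`!)%:R / (#|ballB n t|)%:R.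

Definition A_new (R : fieldType) (n d : nat) : R :=
  ('C(n, d) * 'C(n, d) * (n - d)`!)%:R / ('C(n.-1, n - d))%:R.

From HB Require Import structures.
From mathcomp Require Import all_boot all_order all_algebra all_fingroup.
From mathcomp Require Import zify lra.
Import Order.TTheory GRing.Theory Num.Theory.
Set Implicit Arguments. Unset Strict Implicit. Unset Printing Implicit Defensive.

(* Since C(n,d) d! (n-d)! = n! and n C(n-1,d-1) = d C(n,d), A_new(n,d) equals
   n n! / (d d!), so the claim is n |b_B(n,t)| <= d d!, and by hypothesis it
   suffices that |b_B(n,t)| <= n (n-1) ... (n-t).
   Cut a permutation into maximal blocks of consecutive values i, i+1, ...;
   it is determined by the sequence of the first values of its blocks.  There
   are at most d_B(s, id) + 1 blocks and 0 always starts one, so the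
   permutations with k+1 blocks number at most (k+1) (n-1)^_k: the position of
   0 and an injective sequence of nonzero values.  Summing over k <= t and
   using (n-t-1)^2 >= n, which follows from t <= n - sqrt n - 1, gives the
   falling factorial n^_(t+1). *)

Lemma index_rem_inj (T : eqType) (x : T) (s1 s2 : seq T) :
  x \in s1 -> x \in s2 -> index x s1 = index x s2 -> rem x s1 = rem x s2 ->
  s1 = s2.
Proof.
elim: s1 s2 => [//|a s1 IH] [//|b s2] /=.
rewrite !inE; case: (eqVneq a x) => [->|_]; case: (eqVneq b x) => [->|_] //=.
  by move=> _ _ _ ->.
by move=> s1_x s2_x [eq_index] [-> eq_rem]; rewrite (IH s2).
Qed.

Section BlockHeads.

Variable m : nat.
Implicit Type s : 'S_m.+1.

(* Positions are read as naturals; [inord] maps out-of-range positions to 0. *)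
Definition pval s (j : nat) : nat := val (s (inord j)).

Definition block_start s (j : nat) : bool :=
  (j == 0) || (pval s j != (pval s j.-1).+1).

Definition heads s : seq 'I_m.+1 :=
  [seq s i | i : 'I_m.+1 <- enum 'I_m.+1 & block_start s i].

Lemma pval_ord s (i : 'I_m.+1) : pval s i = val (s i).
Proof. by rewrite /pval inord_val. Qed.

Lemma pval_le s j : pval s j <= m.
Proof. by rewrite -ltnS ltn_ord. Qed.

Lemma pval_inj s j k : j <= m -> k <= m -> pval s j = pval s k -> j = k.
Proof.
move=> le_jm le_km /val_inj /perm_inj /(congr1 (@nat_of_ord _)).
by rewrite !inordK.
Qed.

Lemma mem_val_heads s v : (v \in map val (heads s)) =
  [exists i : 'I_m.+1, block_start s i && (val (s i) == v)].
Proof.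
apply/mapP/existsP => [[y /mapP [i]] | [i /andP[hi /eqP <-]]].
  by rewrite mem_filter => /andP[hi _] -> ->; exists i; rewrite hi eqxx.
by exists (s i) => //; apply/mapP; exists i; rewrite // mem_filter hi mem_enum.
Qed.

Lemma uniq_heads s : uniq (heads s).
Proof. by rewrite (map_inj_uniq (@perm_inj _ s)) filter_uniq ?enum_uniq. Qed.

Lemma ord0_in_heads s : ord0 \in heads s.
Proof.
apply/mapP; exists (s^-1 ord0)%g; last by rewrite permKV.
by rewrite mem_filter mem_enum andbT /block_start pval_ord permKV orbT.
Qed.

Lemma pval_succE s i : i < m ->
  (pval s i.+1 == (pval s i).+1) =
  ((pval s i).+1 <= m) && ((pval s i).+1 \notin map val (heads s)).
Proof.
move=> lt_im; apply/idP/andP => [/eqP succ_i | [le_vm notin_v]].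
  rewrite -succ_i pval_le mem_val_heads; split=> //.
  apply/existsP => -[j /andP[start_j /eqP]]; rewrite -pval_ord.
  move/pval_inj => /(_ (ltn_ord j) lt_im) ej.
  by move: start_j; rewrite /block_start ej succ_i eqxx.
set j := (s^-1 (inord (pval s i).+1))%g.
have pval_j : pval s j = (pval s i).+1.
  by rewrite pval_ord permKV; apply: inordK.
have : ~~ block_start s j.
  apply: contra notin_v => start_j; rewrite mem_val_heads.
  by apply/existsP; exists j; rewrite start_j -pval_j pval_ord /=.
rewrite /block_start negb_or negbK pval_j => /andP[j_neq0 /eqP[]].
have le_jm : j.-1 <= m by have := ltn_ord j; lia.
move/pval_inj => /(_ (ltnW lt_im) le_jm) ei.
have -> : i.+1 = j by rewrite ei prednK ?lt0n.
exact/eqP/pval_j.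
Qed.

Lemma pval_succ s j : ~~ block_start s j.+1 -> pval s j.+1 = (pval s j).+1.
Proof. by rewrite /block_start negbK => /eqP. Qed.

Lemma eq_block_start s1 s2 j : heads s1 = heads s2 ->
  (0 < j -> pval s1 j.-1 = pval s2 j.-1) -> j <= m ->
  block_start s1 j = block_start s2 j.
Proof.
case: j => [//|i] eq_heads eq_pred le_jm.
by rewrite /block_start /= !pval_succE // eq_pred // eq_heads.
Qed.

Lemma pval_block_start s p : p <= m -> block_start s p ->
  pval s p = val (nth ord0 (heads s) (count (block_start s) (iota 0 p))).
Proof.
move=> le_pm start_p; set E := enum 'I_m.+1.
have nth_E : nth ord0 E p = inord p.
  by apply: ord_inj; rewrite nth_enum_ord // inordK.
have split_E : E = take p E ++ inord p :: drop p.+1 E.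
  by rewrite -nth_E -drop_nth ?size_enum_ord // cat_take_drop.
have count_take :
    count (block_start s \o val) (take p E) = count (block_start s) (iota 0 p).
  rewrite -count_map map_take val_enum_ord take_iota.
  by congr (count _ (iota 0 _)); lia.
rewrite /heads -/E {1}split_E filter_cat /= inordK // start_p map_cat nth_cat.
by rewrite size_map size_filter count_take ltnn subnn.
Qed.

Lemma heads_inj : injective heads.
Proof.
move=> s1 s2 eq_heads.
suff eq_pval p : p <= m -> pval s1 p = pval s2 p.
  by apply/permP => i; apply: val_inj; rewrite -!pval_ord eq_pval // -ltnS.
elim/ltn_ind: p => p IH le_pm.
have eq_start j : j <= p -> block_start s1 j = block_start s2 j.
  move=> le_jp; apply: eq_block_start => // [j_gt0|]; first by apply: IH; lia.
  exact: leq_trans le_pm.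
have eq_count :
    count (block_start s1) (iota 0 p) = count (block_start s2) (iota 0 p).
  by apply: eq_in_count => j; rewrite mem_iota => /andP[_ /ltnW/eq_start].
case start_p : (block_start s1 p).
  by rewrite !pval_block_start -?eq_start // eq_count eq_heads.
case: p IH le_pm eq_start start_p {eq_count} => [//|i] IH le_im eq_start.
move=> start_i.
by rewrite !pval_succ -?eq_start ?start_i // IH // ltnW.
Qed.

Lemma size_heads s : size (heads s) = #|[set i : 'I_m.+1 | block_start s i]|.
Proof.
rewrite size_map size_filter cardE enumT /enum_mem -size_filter.
by congr size; apply: eq_filter => i; symmetry; exact: in_set.
Qed.

(* Every block start but the one at position 0 breaks an adjacency of the
   identity. *)
Lemma size_heads_le_dB s : size (heads s) <= (dB s 1).+1.
Proof.
rewrite size_heads (cardsD1 ord0) -[(dB s 1).+1]add1n leq_add ?leq_b1 //.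
pose break (i : 'I_m.+1) := (s (inord i.-1), s i).
have break_inj :
    {in [set i : 'I_m.+1 | block_start s i] :\ ord0 &, injective break}.
  by move=> i j _ _ [_ /perm_inj].
rewrite -(card_in_imset break_inj).
apply/subset_leq_card/subsetP => p /imsetP[i].
rewrite !inE => /andP[i_neq0 start_i] ->.
have i_gt0 : 0 < i.
  by rewrite lt0n; apply: contra i_neq0 => /eqP i0; apply/eqP/ord_inj.
move: start_i; rewrite /block_start eqn0Ngt i_gt0 /pval inord_val => break_i.
apply/andP; split.
  apply/imset2P => -[a b _]; rewrite !inE /break !perm1 => /eqP succ_ab [ea eb].
  by move: break_i; rewrite eb ea succ_ab eqxx.
apply/imset2P; exists (inord i.-1) i => //.
by rewrite inE /= inordK ?prednK //; apply: ltnW.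
Qed.

Lemma card_heads_size k :
  #|[set s : 'S_m.+1 | size (heads s) == k.+1]| <= k.+1 * m ^_ k.
Proof.
set A := [set s | _].
pose code s := (inord (index ord0 (heads s)) : 'I_k.+1,
                [ffun i : 'I_k => nth ord0 (rem ord0 (heads s)) i]).
set F := [set f : {ffun 'I_k -> 'I_m.+1} in ffun_on [set~ ord0] | injectiveb f].
have card_codes : #|setX [set: 'I_k.+1] F| = k.+1 * m ^_ k.
  by rewrite cardsX cardsT card_ord card_inj_ffuns_on cardsC1 !card_ord.
have size_rem s : s \in A -> size (rem ord0 (heads s)) = k.
  by rewrite inE => /eqP size_s; rewrite size_rem ?ord0_in_heads // size_s.
have index_lt s : s \in A -> index ord0 (heads s) < k.+1.
  by rewrite inE => /eqP <-; rewrite index_mem ord0_in_heads.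
have code_inj : {in A &, injective code}.
  move=> s1 s2 A_s1 A_s2 [eq_index eq_rem]; apply: heads_inj.
  apply: (index_rem_inj (x := ord0)); rewrite ?ord0_in_heads //.
    by move: eq_index => /(congr1 val); rewrite /= !inordK ?index_lt.
  apply: (@eq_from_nth _ ord0); first by rewrite !size_rem.
  move=> i; rewrite size_rem // => lt_ik.
  by move/ffunP: eq_rem => /(_ (Ordinal lt_ik)); rewrite !ffunE.
rewrite -card_codes -(card_in_imset code_inj).
apply/subset_leq_card/subsetP => _ /imsetP[s A_s ->].
rewrite !inE /=; apply/andP; split.
  apply/ffun_onP => i; rewrite ffunE !inE.
  have lt_i : (i : nat) < size (rem ord0 (heads s)) by rewrite size_rem.
  have := mem_nth ord0 lt_i.
  by rewrite mem_rem_uniq ?uniq_heads // !inE => /andP[].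
apply/injectiveP => i j; rewrite !ffunE => eq_nth; apply: ord_inj; apply/eqP.
have uniq_rem : uniq (rem ord0 (heads s)) by rewrite rem_uniq ?uniq_heads.
by rewrite -(nth_uniq ord0 (s := rem ord0 (heads s))) ?size_rem // eq_nth.
Qed.

End BlockHeads.

Lemma card_ballB_le_sum m t : #|ballB m.+1 t| <= \sum_(k < t.+1) k.+1 * m ^_ k.
Proof.
pose level (s : 'S_m.+1) : 'I_t.+1 := inord (size (heads s)).-1.
rewrite -sum1_card (partition_big level xpredT) //=.
apply: leq_sum => k _; apply: leq_trans (card_heads_size m k).
rewrite sum1dep_card; apply/subset_leq_card/subsetP => s; rewrite !inE.
case/andP => ball_s /eqP <-.
have size_gt0 : 0 < size (heads s) by have := ord0_in_heads s; case: (heads s).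
have size_le : size (heads s) <= t.+1.
  by apply: leq_trans (size_heads_le_dB s) _; rewrite ltnS.
by rewrite inordK ?prednK.
Qed.

Lemma sum_ffact_le m t : m.+1 <= (m - t) ^ 2 ->
  \sum_(k < t.+1) k.+1 * m ^_ k <= m.+1 ^_ t.+1.
Proof.
elim: t => [|j IH] le_sq; first by rewrite big_ord1 muln1.
(* [m + 1 <= (m - j) (m - j - 1)] as [j < t] *)
have step : m.+1 + j.+2 * (m - j) <= m.+1 * (m - j) by nia.
have le_sq' : m.+1 <= (m - j) ^ 2.
  by apply: leq_trans le_sq _; rewrite leq_exp2r // leq_sub2l.
rewrite big_ord_recr /= (leq_trans (leq_add (IH le_sq') (leqnn _))) //.
rewrite ![m.+1 ^_ _]ffactnS /= ffactnSr.
by have := leq_mul (leqnn (m ^_ j)) step; nia.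
Qed.

Lemma card_ballB_le_ffact m t :
  m.+1 <= (m - t) ^ 2 -> #|ballB m.+1 t| <= m.+1 ^_ t.+1.
Proof. by move/sum_ffact_le; apply: leq_trans (card_ballB_le_sum m t). Qed.

Lemma bin_sqr_fact_mul n d : 0 < d <= n ->
  'C(n, d) * 'C(n, d) * (n - d)`! * (d * d`!) = n * n`! * 'C(n.-1, n - d).
Proof.
case/andP=> d_gt0 le_dn; have n_gt0 : 0 < n := leq_trans d_gt0 le_dn.
have bin_pred : n * 'C(n.-1, n - d) = d * 'C(n, d).
  have -> : n - d = n.-1 - d.-1 by lia.
  by rewrite bin_sub ?mul_bin_diag ?prednK //; lia.
by rewrite -(bin_fact le_dn) [RHS]mulnAC bin_pred; lia.
Qed.

Local Open Scope ring_scope.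

Lemma A_newE (R : numFieldType) n d : (0 < d <= n)%N ->
  A_new R n d = (n * n`!)%:R / (d * d`!)%:R.
Proof.
move=> /andP[d_gt0 le_dn]; have le_bin : (n - d <= n.-1)%N by lia.
rewrite /A_new; apply/eqP.
rewrite eqr_div ?pnatr_eq0 -?lt0n ?bin_gt0 ?muln_gt0 ?fact_gt0 ?d_gt0 //.
by rewrite -!natrM bin_sqr_fact_mul ?d_gt0.
Qed.

Lemma A_new_le_A_SP (R : numFieldType) n d t : (0 < d <= n)%N ->
  (n * #|ballB n t| <= d * d`!)%N -> A_new R n d <= A_SP R n t.
Proof.
move=> hd le_ball; have ball_gt0 : (0 < #|ballB n t|)%N.
  by apply/card_gt0P; exists 1%g; rewrite inE /dB setDv cards0.
rewrite A_newE // /A_SP ler_pdivrMr ?ltr0n ?muln_gt0 ?fact_gt0 ?(andP hd).1 //.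
rewrite mulrAC ler_pdivlMr ?ltr0n // -!natrM ler_nat.
by rewrite mulnAC mulnC leq_mul2l le_ball orbT.
Qed.

Lemma leq_sqr_subn_of_sqrt (R : rcfType) n t :
  (t%:R : R) <= n%:R - Num.sqrt n%:R - 1 -> (n <= (n - t.+1) ^ 2)%N.
Proof.
move=> le_t; have sqrt_ge0 : 0 <= Num.sqrt (n%:R : R) := sqrtr_ge0 _.
have le_tn : (t.+1 <= n)%N by rewrite -(ler_nat R) -addn1 natrD; lra.
have le_sqrt : Num.sqrt (n%:R : R) <= (n - t.+1)%:R.
  by rewrite natrB // -addn1 natrD; lra.
rewrite -(ler_nat R) natrX -{1}(sqr_sqrtr (ler0n R n)).
by rewrite ler_pXn2r ?nnegrE.
Qed.

Theorem mainTheorem8 (R : rcfType) (n t : nat) :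
  (0 < n)%N -> (0 < t)%N ->
  (t%:R : R) <= n%:R - Num.sqrt (n%:R) - 1 ->
  (n * \prod_(i < t.+1) (n - i) <= t.*2.+1 * (t.*2.+1)`!)%N ->
  (t.*2.+1 <= n.-1)%N ->
  A_new R n t.*2.+1 <= A_SP R n t.
Proof.
case: n => [//|m] _ _ le_t le_prod le_dn.
have le_sq : (m.+1 <= (m - t) ^ 2)%N.
  by rewrite -subSS (leq_sqr_subn_of_sqrt le_t).
apply: A_new_le_A_SP; first by rewrite ltn0Sn (leq_trans le_dn).
apply: leq_trans le_prod; rewrite leq_mul2l -ffact_prod.
by rewrite card_ballB_le_ffact ?orbT.
Qed.
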